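(* Let $k \ge 1$ and $m \ge 1$, and define \[ a(n) = \begin{cases} \frac14\binom{n+2}{3}, & n \text{ even},\\ \frac{1}{24}(n-1)(n+1)(n+3), & n \text{ odd}\end{cases} \] (the number of odd biGrassmannian permutations of $[n]$). Then the number of odd biGrassmannian permutations of $[m]$ that avoid $\operatorname{id}_k=12\cdots k$ equals $a(m)$ if $m \le k$; equals $a(2k-m)$ if $k < m < 2k$ and $m-k$ is even; equals $a(2k-m-2)$ if $k < m < 2k$ and $m-k$ is odd; and equals $0$ if $m \ge 2k$.
   Context: A permutation is Grassmannian if it has at most one descent; it is biGrassmannian if both it and its inverse are Grassmannian; it is odd if it has an odd number of inversions. A permutation avoids $12\cdots k$ if it has no increasing subsequence of length $k$. *)

(* Permutations of [m] = {1..m} are modelled as 'S_m,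
   permutations of 'I_m = {0..m-1}, compared via their nat values. *)
From mathcomp Require Import all_boot all_order all_fingroup.
Set Implicit Arguments. Unset Strict Implicit. Unset Printing Implicit Defensive.

Definition is_descent (m : nat) (s : 'S_m) (i : 'I_m) : bool :=
  [exists j : 'I_m, (nat_of_ord j == i.+1) && (s j < s i)].

Definition ndescents (m : nat) (s : 'S_m) : nat :=
  #|[set i : 'I_m | is_descent s i]|.

Definition grassmannian (m : nat) (s : 'S_m) : bool := ndescents s <= 1.

Definition bigrassmannian (m : nat) (s : 'S_m) : bool :=
  grassmannian s && grassmannian (s^-1)%g.

Definition ninv (m : nat) (s : 'S_m) : nat :=
  #|[set p : 'I_m * 'I_m | (p.1 < p.2) && (s p.2 < s p.1)]|.

Definition odd_perm_inv (m : nat) (s : 'S_m) : bool := odd (ninv s).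

Definition contains_id (k m : nat) (s : 'S_m) : bool :=
  [exists f : {ffun 'I_k -> 'I_m},
     [forall i : 'I_k, forall j : 'I_k,
        (i < j) ==> ((f i < f j) && (s (f i) < s (f j)))]].

Definition avoids_id (k m : nat) (s : 'S_m) : bool := ~~ contains_id k s.

(* a(n): exact nat division (the quotients are integers). *)
Definition a_seq (n : nat) : nat :=
  if odd n then ((n - 1) * (n + 1) * (n + 3)) %/ 24
  else 'C(n + 2, 3) %/ 4.

From mathcomp Require Import all_boot all_order all_fingroup.
From mathcomp Require Import zify.
Set Implicit Arguments. Unset Strict Implicit. Unset Printing Implicit Defensive.

(* A biGrassmannian permutation of [0, m) other than the identity exchanges two
   adjacent blocks [a, a + b) and [a + b, a + b + c), b, c > 0: if d is the descent
   of s and e the descent of s^-1, then a = s (d + 1), b = d + 1 - a, c = e + 1 - a.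
   Such a permutation has b * c inversions and its increasing subsequences have
   length at most m - min(b, c).  So the odd ones avoiding 12...k are those with
   b, c odd and larger than m - k; writing b = j + 2x and c = j + 2y with j the
   least odd number above m - k, they correspond to the triples (a, x, y) with
   a + 2x + 2y <= m - 2j, and there are a(m - 2j + 2) of these. *)

Definition block_swap (a b c i : nat) : nat :=
  if i < a then i else if i < a + b then i + c else if i < a + b + c then i - b else i.

Ltac block_swap_cases := rewrite /block_swap; repeat case: ifP => ?; lia.

Lemma block_swap_lt m a b c i : a + b + c <= m -> i < m -> block_swap a b c i < m.
Proof. by move=> le_m lt_im; block_swap_cases. Qed.

Lemma block_swapK a b c i : block_swap a c b (block_swap a b c i) = i.
Proof. by rewrite {2}/block_swap; repeat case: ifP => ?; block_swap_cases. Qed.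

Lemma block_swap_inj a b c : injective (block_swap a b c).
Proof. exact: can_inj (block_swapK a b c). Qed.

Lemma block_swap_descent a b c i :
  block_swap a b c i.+1 < block_swap a b c i -> i.+1 = a + b.
Proof. by block_swap_cases. Qed.

Lemma block_swap_params_inj m a b c a' b' c' :
  0 < b -> 0 < c -> a + b + c <= m -> 0 < b' -> 0 < c' -> a' + b' + c' <= m ->
  (forall i, i < m -> block_swap a b c i = block_swap a' b' c' i) ->
  [/\ a = a', b = b' & c = c'].
Proof.
move=> b_gt0 c_gt0 le_m b'_gt0 c'_gt0 le'_m eq_swap.
have eq_a : a = a'.
  by case: (ltngtP a a') => lt_a //; [have := eq_swap a | have := eq_swap a'];
     move=> /(_ ltac:(lia)); block_swap_cases.
subst a'; have eq_c : c = c' by have := eq_swap a ltac:(lia); block_swap_cases.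
subst c'; split => //.
by case: (ltngtP b b') => lt_b //; [have := eq_swap (a + b) | have := eq_swap (a + b')];
   move=> /(_ ltac:(lia)); block_swap_cases.
Qed.

Lemma increasing_steps (h : nat -> nat) (lo hi : nat) :
  (forall k, lo <= k -> k < hi -> h k < h k.+1) ->
  forall i j, lo <= i -> i <= j -> j <= hi -> h i + (j - i) <= h j.
Proof.
move=> h_step i j lo_i; elim: j => [|j IHj] le_ij le_j_hi.
  by rewrite (_ : i = 0) ?addn0; lia.
have [lt_ij | ge_ij] := ltnP i j.+1.
  by have := IHj ltac:(lia) ltac:(lia); have := h_step j ltac:(lia) ltac:(lia); lia.
by rewrite (_ : i = j.+1) ?subnn ?addn0; lia.
Qed.

Lemma increasing_bounded_id (m : nat) (h : nat -> nat) :
  (forall k, k.+1 < m -> h k < h k.+1) -> (forall i, i < m -> h i < m) ->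
  forall i, i < m -> h i = i.
Proof.
move=> h_step h_lt i lt_im.
have step k : 0 <= k -> k < m.-1 -> h k < h k.+1 by move=> _ lt_k; apply: h_step; lia.
have le_i : i <= m.-1 by lia.
have := increasing_steps step (leq0n 0) (leq0n i) le_i.
have := increasing_steps step (leq0n i) le_i (leqnn m.-1).
have := h_lt m.-1 ltac:(lia); lia.
Qed.

Definition descends_only_at (m : nat) (h : nat -> nat) (d : nat) : Prop :=
  [/\ d.+1 < m, h d.+1 < h d & forall k, k.+1 < m -> k != d -> h k < h k.+1].

Definition inverse_on (m : nat) (f g : nat -> nat) : Prop :=
  forall i, i < m -> [/\ f i < m, g i < m, f (g i) = i & g (f i) = i].

Lemma inverse_on_sym m f g : inverse_on m f g -> inverse_on m g f.
Proof. by move=> fg i /fg[]. Qed.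

Lemma descends_only_at_mono m h d : descends_only_at m h d ->
  forall i j, i <= j -> j < m -> (j <= d) || (d < i) -> h i + (j - i) <= h j.
Proof.
case=> _ _ h_step i j le_ij lt_jm off_d.
apply: (increasing_steps (lo := i) (hi := j)) => // k le_ik lt_kj.
apply: h_step; lia.
Qed.

Lemma descends_only_at_lt m h d : descends_only_at m h d ->
  forall i j, i < j -> j < m -> (j <= d) || (d < i) -> h i < h j.
Proof.
move=> hd i j lt_ij lt_jm off_d.
by have := descends_only_at_mono hd (ltnW lt_ij) lt_jm off_d; lia.
Qed.

Lemma descends_only_at_ge m h d i : descends_only_at m h d -> i <= d -> i <= h i.
Proof.
move=> hd le_id; have [lt_dm _ _] := hd.
have := descends_only_at_mono hd (leq0n i) ltac:(lia) ltac:(lia); lia.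
Qed.

Lemma descends_only_at_le m h d i : descends_only_at m h d ->
  (forall j, j < m -> h j < m) -> d < i -> i < m -> h i <= i.
Proof.
move=> hd h_lt lt_di lt_im.
have := descends_only_at_mono hd (i := i) (j := m.-1) ltac:(lia) ltac:(lia) ltac:(lia).
have := h_lt m.-1 ltac:(lia); lia.
Qed.

Section UniqueDescents.
Variables (m d e : nat) (f g : nat -> nat).
Hypotheses (fd : descends_only_at m f d) (ge : descends_only_at m g e).
Hypothesis fg : inverse_on m f g.

Lemma f_lt i : i < m -> f i < m. Proof. by case/fg. Qed.
Lemma g_lt i : i < m -> g i < m. Proof. by case/fg. Qed.
Lemma fK i : i < m -> g (f i) = i. Proof. by case/fg. Qed.
Lemma gK i : i < m -> f (g i) = i. Proof. by case/fg. Qed.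

Lemma fixed_low i : i < m -> i <= d -> f i <= e -> f i = i.
Proof.
move=> lt_im le_id le_fie.
have := descends_only_at_ge fd le_id; have := descends_only_at_ge ge le_fie.
rewrite fK //; lia.
Qed.

Lemma fixed_high i : i < m -> d < i -> e < f i -> f i = i.
Proof.
move=> lt_im lt_di lt_efi.
have := descends_only_at_le fd f_lt lt_di lt_im.
have := descends_only_at_le ge g_lt lt_efi (f_lt lt_im); rewrite fK //; lia.
Qed.

Lemma f_succ_le : f d.+1 <= e.
Proof.
have [lt_dm drop _] := fd.
case: (leqP (f d.+1) e) => // lt_e.
have fix_d1 := fixed_high lt_dm (ltnSn d) lt_e.
have lt_fd : f d < m by apply: f_lt; lia.
have := descends_only_at_lt ge (i := d.+1) (j := f d) ltac:(lia) lt_fd ltac:(lia).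
rewrite -{1}fix_d1 !fK //; lia.
Qed.

Lemma fixed_below_succ v : v < f d.+1 -> f v = v.
Proof.
have [lt_dm _ _] := fd; move=> lt_v.
have le_e := f_succ_le.
have lt_vm : v < m by have := f_lt lt_dm; lia.
have := descends_only_at_lt ge (i := v) (j := f d.+1) lt_v (f_lt lt_dm) ltac:(lia).
rewrite fK // => lt_g.
have := fixed_low (i := g v) (g_lt lt_vm) ltac:(lia); rewrite gK // => /(_ ltac:(lia)) fix_gv.
by rewrite {1}fix_gv gK.
Qed.

Lemma f_succ_le_d : f d.+1 <= d.
Proof.
have [lt_dm drop _] := fd.
have := descends_only_at_le fd f_lt (ltnSn d) lt_dm.
case: (leqP (f d.+1) d) => // lt_d le_d1.
have fix_d1 : f d.+1 = d.+1 by lia.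
have := fixed_below_succ (v := d); rewrite fix_d1 => /(_ (ltnSn d)); lia.
Qed.

End UniqueDescents.

Section BlockSwapShape.
Variables (m d e : nat) (f g : nat -> nat).
Hypotheses (fd : descends_only_at m f d) (ge : descends_only_at m g e).
Hypothesis fg : inverse_on m f g.

Local Notation a := (f d.+1).
Let lt_dm : d.+1 < m. Proof. by case: fd. Qed.
Let lt_em : e.+1 < m. Proof. by case: ge. Qed.
Let a_le_e : a <= e := f_succ_le fd ge fg.
Let a_le_d : a <= d := f_succ_le_d fd ge fg.
Let f_lt := f_lt fg.
Let g_lt := g_lt fg.
Let fK := fK fg.
Let gK := gK fg.
Let f_mono := descends_only_at_mono fd.
Let f_incr := descends_only_at_lt fd.
Let g_incr := descends_only_at_lt ge.

Lemma f_block_gt i : a <= i -> i <= d -> e < f i.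
Proof.
move=> le_ai le_id; case: (leqP (f i) e) => // le_e.
have fix_i := fixed_low fd ge fg (i := i) ltac:(lia) le_id le_e.
have := descends_only_at_mono ge (i := a) (j := i) le_ai ltac:(lia) ltac:(lia).
rewrite -{2}fix_i !fK //; lia.
Qed.

Lemma f_block_succ i : a <= i -> i < d -> f i.+1 = (f i).+1.
Proof.
move=> le_ai lt_id.
have lt_f := f_incr (i := i) (j := i.+1) (ltnSn i) ltac:(lia) ltac:(lia).
have lt_fm := f_lt (i := i.+1) ltac:(lia).
have lt_e := f_block_gt le_ai (ltnW lt_id).
set w := (f i).+1; have lt_wm : w < m by rewrite /w; lia.
case: (leqP (g w) d) => le_gw.
  case: (leqP (g w) i) => le_gwi.
    by have := f_mono (i := g w) (j := i) le_gwi ltac:(lia) ltac:(lia); rewrite gK // /w; lia.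
  by have := f_mono (i := i.+1) (j := g w) le_gwi ltac:(lia) ltac:(lia); rewrite gK // /w; lia.
have fix_gw := fixed_high fd ge fg (g_lt lt_wm) le_gw ltac:(rewrite gK // /w; lia).
rewrite gK // in fix_gw.
case: (ltngtP (f i.+1) w) => [lt_fw|lt_wf|//]; first by rewrite /w in lt_fw; lia.
have := g_incr (i := w) (j := f i.+1) lt_wf lt_fm ltac:(rewrite /w; lia).
rewrite fK //; lia.
Qed.

Lemma f_block_start : f a = e.+1.
Proof.
have g_le_d : g e.+1 <= d := f_succ_le ge fd (inverse_on_sym fg).
have fg_e : f (g e.+1) = e.+1 by rewrite gK.
case: (ltnP (g e.+1) a) => le_ga.
  by have := fixed_below_succ fd ge fg le_ga; rewrite fg_e; lia.
have := f_mono le_ga (g_lt lt_em) ltac:(lia).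
by have := f_block_gt (leqnn a) a_le_d; rewrite fg_e; lia.
Qed.

Lemma f_block_shift i : a <= i -> i <= d -> f i = i + (e.+1 - a).
Proof.
elim: i => [|i IHi] le_ai le_id; first by rewrite (_ : 0 = a) ?f_block_start; lia.
case: (leqP a i) => [le_ai'|lt_ia]; first by rewrite f_block_succ ?IHi //; lia.
by rewrite (_ : i.+1 = a) ?f_block_start; lia.
Qed.

Lemma f_tail_succ j : d < j -> j.+1 < m -> f j.+1 <= e -> f j.+1 = (f j).+1.
Proof.
move=> lt_dj lt_jm le_e.
have lt_f := f_incr (i := j) (j := j.+1) (ltnSn j) lt_jm ltac:(lia).
set w := (f j.+1).-1; have lt_wm : w < m by have := f_lt lt_jm; rewrite /w; lia.
have fg_w : f (g w) = w := gK lt_wm.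
case: (leqP (g w) d) => le_gw.
  have fix_gw := fixed_low fd ge fg (g_lt lt_wm) le_gw ltac:(rewrite fg_w /w; lia).
  rewrite fg_w in fix_gw.
  case: (ltngtP (f j) w) => [lt_fw|lt_wf|eq_fw]; last 2 first.
  - by rewrite /w in lt_wf; lia.
  - by have := fK (i := j) ltac:(lia); rewrite eq_fw; lia.
  by have := g_incr (i := f j) (j := w) lt_fw lt_wm ltac:(rewrite /w; lia); rewrite fK; lia.
case: (leqP (g w) j) => le_gwj.
  by have := f_mono (i := g w) (j := j) le_gwj ltac:(lia) ltac:(lia); rewrite fg_w /w; lia.
by have := f_mono (i := j.+1) (j := g w) le_gwj (g_lt lt_wm) ltac:(lia); rewrite fg_w /w; lia.
Qed.

Lemma f_tail_shift j : d < j -> j < m -> f j <= e -> f j = a + (j - d.+1).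
Proof.
elim: j => [|j IHj] lt_dj lt_jm le_e; first by lia.
have [eq_dj|lt_dj'] : d = j \/ d < j by lia.
  by rewrite -eq_dj subnn addn0.
have := f_incr (i := j) (j := j.+1) (ltnSn j) lt_jm ltac:(lia) => lt_f.
by rewrite f_tail_succ // IHj //; lia.
Qed.

Lemma f_tail_end : d + (e.+1 - a) < m /\ f (d + (e.+1 - a)) = e.
Proof.
have lt_gm : g e < m := g_lt (ltac:(lia) : e < m).
have fg_e : f (g e) = e by rewrite gK //; lia.
case: (ltnP (g e) a) => le_ga.
  by have := fixed_below_succ fd ge fg le_ga; rewrite fg_e; lia.
case: (leqP (g e) d) => le_gd.
  by have := f_block_gt le_ga le_gd; rewrite fg_e; lia.
have := f_tail_shift le_gd lt_gm ltac:(lia); rewrite fg_e => eq_g.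
by rewrite (_ : d + _ = g e) //; lia.
Qed.

Lemma f_block_swap i : i < m -> f i = block_swap a (d.+1 - a) (e.+1 - a) i.
Proof.
move=> lt_im; rewrite /block_swap.
case: (ltnP i a) => [lt_ia|le_ai]; first by rewrite (fixed_below_succ fd ge fg lt_ia).
case: (ltnP i (a + (d.+1 - a))) => [lt_i|le_i]; first by rewrite f_block_shift //; lia.
have [lt_end f_end] := f_tail_end.
case: (ltnP i (a + (d.+1 - a) + (e.+1 - a))) => [lt_i'|le_i'].
  have := f_mono (i := i) (j := d + (e.+1 - a)) ltac:(lia) lt_end ltac:(lia).
  by rewrite f_end => le_fi; rewrite f_tail_shift //; lia.
case: (leqP (f i) e) => le_fi; first by have := f_tail_shift (j := i) ltac:(lia) lt_im le_fi; lia.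
by rewrite (fixed_high fd ge fg lt_im _ le_fi) //; lia.
Qed.

Lemma block_swap_end_le : a + (d.+1 - a) + (e.+1 - a) <= m.
Proof. by have [lt_end _] := f_tail_end; lia. Qed.

End BlockSwapShape.

Lemma count_iota_interval lo hi m : lo <= hi -> hi <= m ->
  count (fun n => lo <= n < hi) (iota 0 m) = hi - lo.
Proof.
move=> le_lh le_hm.
have -> : iota 0 m = iota 0 lo ++ iota lo (hi - lo) ++ iota hi (m - hi).
  by rewrite -{1}(subnKC le_hm) iotaD -{1}(subnKC le_lh) iotaD catA add0n.
rewrite !count_cat (@eq_in_count _ _ pred0 (iota 0 lo)); last first.
  by move=> n; rewrite mem_iota /=; lia.
rewrite (@eq_in_count _ _ predT (iota lo _)); last by move=> n; rewrite mem_iota /=; lia.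
rewrite (@eq_in_count _ _ pred0 (iota hi _)); last by move=> n; rewrite mem_iota /=; lia.
by rewrite !count_pred0 count_predT size_iota addn0.
Qed.

Lemma card_ord_interval m lo hi : lo <= hi -> hi <= m ->
  #|[set i : 'I_m | lo <= i < hi]| = hi - lo.
Proof.
move=> le_lh le_hm; rewrite cardsE cardE /enum_mem size_filter -enumT.
by rewrite -(@count_iota_interval lo hi m) // -val_enum_ord count_map.
Qed.

Lemma card_ord_interval_compl m lo hi : lo <= hi -> hi <= m ->
  #|~: [set i : 'I_m | lo <= i < hi]| = m - (hi - lo).
Proof.
move=> le_lh le_hm; have := cardsC [set i : 'I_m | lo <= i < hi].
by rewrite card_ord_interval // card_ord; lia.
Qed.

Definition bswap_fun (m a b c : nat) (i : 'I_m) : 'I_m :=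
  if a + b + c <= m then insubd i (block_swap a b c i) else i.
Arguments bswap_fun : clear implicits.

Lemma bswap_fun_inj m a b c : injective (bswap_fun m a b c).
Proof.
move=> i j; rewrite /bswap_fun; case: ifP => [le_m|_ //].
move/(congr1 val); rewrite !val_insubd !block_swap_lt // => /block_swap_inj.
exact: val_inj.
Qed.

Definition bswap (m a b c : nat) : 'S_m := perm (@bswap_fun_inj m a b c).

Lemma bswapE m a b c i : a + b + c <= m -> bswap m a b c i = block_swap a b c i :> nat.
Proof. by move=> le_m; rewrite permE /bswap_fun le_m val_insubd block_swap_lt. Qed.

Section BlockSwapPerm.
Variables (m a b c : nat).
Hypothesis le_m : a + b + c <= m.

Lemma bswapV : (bswap m a b c)^-1%g = bswap m a c b.
Proof.
have le_m' : a + c + b <= m by lia.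
apply/permP => i; apply: (@perm_inj _ (bswap m a b c)); rewrite permKV.
by apply: val_inj; rewrite /= !bswapE // block_swapK.
Qed.

Lemma bswap_descent i : is_descent (bswap m a b c) i -> i.+1 = a + b.
Proof.
case/existsP=> j /andP[/eqP val_j]; rewrite !bswapE // val_j.
exact: block_swap_descent.
Qed.

Lemma grassmannian_bswap : grassmannian (bswap m a b c).
Proof.
apply/card_le1_eqP => i j; rewrite !inE => /bswap_descent di /bswap_descent dj.
by apply: ord_inj; lia.
Qed.

Lemma ninv_bswap : ninv (bswap m a b c) = b * c.
Proof.
rewrite /ninv (_ : b * c = (a + b - a) * (a + b + c - (a + b))); last by lia.
rewrite -(@card_ord_interval m a) -?(@card_ord_interval m (a + b)); try lia.
rewrite -cardsX; apply: eq_card => -[i j]; rewrite !inE /= !bswapE //.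
by apply/andP/andP => [[]|[/andP[? ?] /andP[? ?]]]; block_swap_cases.
Qed.

(* An increasing subsequence cannot meet both exchanged blocks: every value on
   [a, a + b) exceeds every value on [a + b, a + b + c). *)
Lemma contains_id_bswap_bound k :
  contains_id k (bswap m a b c) -> (k <= m - b) || (k <= m - c).
Proof.
set s := bswap m a b c; case/existsP => f /forallP f_incr.
have f_lt (i j : 'I_k) : i < j -> (f i < f j) && (s (f i) < s (f j)).
  by move=> lt_ij; have /forallP/(_ j)/implyP := f_incr i; apply.
have f_inj : injective f.
  move=> i j eq_f; apply: ord_inj; case: (ltngtP i j) => // lt;
    by have := f_lt _ _ lt; rewrite eq_f ltnn.
have not_BC (i j : 'I_k) : a <= f i < a + b -> a + b <= f j < a + b + c -> False.
  move=> Bi Cj; case: (ltngtP i j) => [lt_ij|lt_ji|eq_ij].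
  - by have := f_lt _ _ lt_ij; rewrite !bswapE //; move: Bi Cj; block_swap_cases.
  - by have := f_lt _ _ lt_ji; lia.
  - by move: Bi Cj; rewrite (ord_inj eq_ij); lia.
have card_im : #|f @: 'I_k| = k by rewrite card_imset // card_ord.
apply/orP; case: (boolP [exists i, a <= f i < a + b]) => [/existsP[i0 Bi0]|noB].
  right; rewrite -card_im (_ : m - c = m - (a + b + c - (a + b))); last by lia.
  rewrite -card_ord_interval_compl; try lia.
  apply/subset_leq_card/subsetP => _ /imsetP[i _ ->]; rewrite !inE.
  by apply/negP => Ci; apply: not_BC Bi0 Ci.
left; rewrite -card_im (_ : m - b = m - (a + b - a)); last by lia.
rewrite -card_ord_interval_compl; try lia.
apply/subset_leq_card/subsetP => _ /imsetP[i _ ->]; rewrite !inE.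
by apply/negP => Bi; move/negP: noB; apply; apply/existsP; exists i.
Qed.

Lemma contains_id_bswap_skip k :
  (k <= m - b) || (k <= m - c) -> contains_id k (bswap m a b c).
Proof.
move=> le_k; have le_km : k <= m by lia.
pose skip p q :=
  [ffun i : 'I_k => insubd (widen_ord le_km i) (if i < p then i : nat else i + q)].
have skipE p q i : q <= m - k -> skip p q i = (if i < p then i : nat else i + q) :> nat.
  move=> le_q; rewrite ffunE val_insubd.
  by case: ifP; case: ifP => //; have := ltn_ord i; lia.
apply/existsP; case/orP: le_k => le_k; [exists (skip a b) | exists (skip (a + b) c)];
  apply/forallP => i; apply/forallP => j; apply/implyP => lt_ij;
  rewrite !bswapE // !skipE; try lia; block_swap_cases.
Qed.

Lemma contains_id_bswap k :
  contains_id k (bswap m a b c) = (k <= m - b) || (k <= m - c).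
Proof. by apply/idP/idP => [/contains_id_bswap_bound|/contains_id_bswap_skip]. Qed.

End BlockSwapPerm.

Lemma bigrassmannian_bswap m a b c : a + b + c <= m -> bigrassmannian (bswap m a b c).
Proof.
move=> le_m; rewrite /bigrassmannian grassmannian_bswap // bswapV //.
by apply: grassmannian_bswap; lia.
Qed.

Definition perm_nat (m : nat) (s : 'S_m) (i : nat) : nat :=
  if insub i is Some j then s j : nat else i.

Lemma perm_natE m (s : 'S_m) (i : 'I_m) : perm_nat s i = s i.
Proof. by rewrite /perm_nat valK. Qed.

Lemma perm_nat_lt m (s : 'S_m) i : i < m -> perm_nat s i < m.
Proof. by move=> lt_im; rewrite -[i]/(val (Ordinal lt_im)) perm_natE. Qed.

Section PermNat.
Variables (m : nat) (s : 'S_m).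

Lemma inverse_on_perm_nat : inverse_on m (perm_nat s) (perm_nat s^-1%g).
Proof.
move=> i lt_im; rewrite !perm_nat_lt //; split=> //;
  by rewrite -[i]/(val (Ordinal lt_im)) !perm_natE ?permKV ?permK.
Qed.

Lemma is_descent_perm_nat (i : 'I_m) :
  is_descent s i = (i.+1 < m) && (perm_nat s i.+1 < perm_nat s i).
Proof.
apply/existsP/andP => [[j /andP[/eqP val_j]]|[lt_im]].
  by rewrite -val_j !perm_natE.
by exists (Ordinal lt_im); rewrite /= eqxx -[i.+1]/(val (Ordinal lt_im)) -!perm_natE.
Qed.

Lemma perm_nat_ascent (i : 'I_m) : i.+1 < m -> ~~ is_descent s i ->
  perm_nat s i < perm_nat s i.+1.
Proof.
move=> lt_im; rewrite is_descent_perm_nat lt_im -leqNgt leq_eqVlt => /orP[/eqP eq_s|//].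
have [_ _ _ sK] := inverse_on_perm_nat lt_im; have [_ _ _ sK'] := inverse_on_perm_nat (ltn_ord i).
by have := congr1 (perm_nat s^-1%g) eq_s; rewrite sK sK'; lia.
Qed.

Lemma grassmannian_descends_only_at : grassmannian s -> s != 1%g ->
  exists d, descends_only_at m (perm_nat s) d.
Proof.
move=> grass_s s_neq1.
case: (boolP [exists i, is_descent s i]) => [/existsP[d desc_d]|no_desc].
  exists d; move: (desc_d); rewrite is_descent_perm_nat => /andP[lt_dm drop].
  split=> // k lt_km neq_kd; have lt_k : k < m by lia.
  apply: (perm_nat_ascent (i := Ordinal lt_k)) => //; apply/negP => desc_k.
  have /card_le1_eqP/(_ (Ordinal lt_k) d) := grass_s.
  by rewrite !inE => /(_ desc_k desc_d) eq_kd; move: neq_kd; rewrite eq_kd eqxx.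
case/eqP: s_neq1; apply/permP => i; apply: ord_inj; rewrite perm1 -perm_natE.
apply: increasing_bounded_id => [k lt_km||]; [|exact: perm_nat_lt|exact: ltn_ord].
apply: (perm_nat_ascent (i := Ordinal (ltnW lt_km))) => //.
by apply/negP => desc_k; move/negP: no_desc; apply; apply/existsP; exists (Ordinal (ltnW lt_km)).
Qed.

End PermNat.

Lemma bigrassmannian_bswap_form m (s : 'S_m) : bigrassmannian s -> s != 1%g ->
  exists a b c, [/\ 0 < b, 0 < c, a + b + c <= m & s = bswap m a b c].
Proof.
case/andP => grass_s grass_si s_neq1.
have si_neq1 : s^-1%g != 1%g.
  by apply: contra s_neq1 => /eqP si1; rewrite -(invgK s) si1 invg1.
have [d fd] := grassmannian_descends_only_at grass_s s_neq1.
have [e ge] := grassmannian_descends_only_at grass_si si_neq1.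
have fg := inverse_on_perm_nat s.
exists (perm_nat s d.+1), (d.+1 - perm_nat s d.+1), (e.+1 - perm_nat s d.+1).
have le_m := block_swap_end_le fd ge fg.
split=> //; [have := f_succ_le_d fd ge fg | have := f_succ_le fd ge fg |]; try lia.
by apply/permP => i; apply: ord_inj; rewrite bswapE // -perm_natE (f_block_swap fd ge fg).
Qed.

Section LatticeCount.
Variable m : nat.

Lemma sum_ord_addn_eq (X x : nat) : x < m -> \sum_(a < m) (a + X == x) = (X <= x).
Proof.
move=> lt_xm; case: (leqP X x) => [le_Xx|lt_xX]; last first.
  by rewrite big1 // => a _; apply/eqP; rewrite eqb0; apply/eqP; lia.
have lt_m : x - X < m by lia.
rewrite (bigD1 (Ordinal lt_m)) //= big1 => [|a neq_a]; first by rewrite subnK ?eqxx.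
by apply/eqP; rewrite eqb0; apply: contra neq_a => /eqP eq_x; apply/eqP/ord_inj => /=; lia.
Qed.

Lemma sum_ord_at0 (m_gt0 : 0 < m) (F : 'I_m -> nat) :
  (forall i : 'I_m, 0 < i -> F i = 0) -> \sum_(i < m) F i = F (Ordinal m_gt0).
Proof.
move=> F_eq0; rewrite (bigD1 (Ordinal m_gt0)) //= big1 ?addn0 // => i neq_i.
by apply: F_eq0; rewrite lt0n; apply: contra neq_i => /eqP i0; apply/eqP/ord_inj.
Qed.

Lemma sum_ord_leq (y : nat) : y < m -> \sum_(b < m) (b <= y) = y.+1.
Proof.
move=> lt_ym; rewrite -[y.+1]subn0 -(@card_ord_interval m 0 y.+1) // -sum1_card [RHS]big_mkcond.
by apply: eq_bigr => b _; rewrite inE.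
Qed.

Definition pairs_le (y : nat) := \sum_(b < m) \sum_(c < m) (b + c <= y).

Lemma pairs_le_double y : y < m -> (pairs_le y).*2 = y.+1 * y.+2.
Proof.
elim: y => [|y IHy] lt_ym.
  by rewrite /pairs_le !(sum_ord_at0 lt_ym) //= => i i_gt0;
    repeat (rewrite big1 // => ? _); lia.
have -> : pairs_le y.+1 = pairs_le y + \sum_(b < m) (b <= y.+1).
  rewrite /pairs_le -big_split; apply: eq_bigr => b _ /=.
  rewrite -(@sum_ord_addn_eq b y.+1) // -big_split; apply: eq_bigr => c _ /=.
  by case: (ltngtP (b + c) y.+1); case: (ltngtP b y.+1); lia.
by rewrite sum_ord_leq // doubleD IHy; lia.
Qed.

Definition triples_le (x : nat) :=
  \sum_(a < m) \sum_(b < m) \sum_(c < m) (a + 2 * b + 2 * c <= x).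

Lemma triples_le0 : 0 < m -> triples_le 0 = 1.
Proof.
move=> m_gt0; rewrite /triples_le !(sum_ord_at0 m_gt0) //= => i i_gt0;
  by repeat (rewrite big1 // => ? _); lia.
Qed.

(* The new triples are those with [a + 2 * (b + c) = x.+1], one for each pair
   with [b + c <= x.+1./2]. *)
Lemma triples_leS x : x.+1 < m -> triples_le x.+1 = triples_le x + pairs_le (x.+1)./2.
Proof.
move=> lt_xm.
have -> : pairs_le (x.+1)./2 =
    \sum_(a < m) \sum_(b < m) \sum_(c < m) (a + 2 * b + 2 * c == x.+1).
  rewrite exchange_big; apply: eq_bigr => b _; rewrite exchange_big; apply: eq_bigr => c _.
  under eq_bigr => a _ do rewrite -addnA.
  by rewrite sum_ord_addn_eq //; congr nat_of_bool; lia.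
rewrite /triples_le -big_split; apply: eq_bigr => a _; rewrite -big_split; apply: eq_bigr => b _.
rewrite -big_split; apply: eq_bigr => c _ /=.
by case: (ltngtP (a + 2 * b + 2 * c) x.+1); lia.
Qed.

Lemma triples_le_24 x : x < m ->
  triples_le x * 24 = if odd x then x.+1 * x.+3 * (x + 5) else x.+2 * x.+3 * x.+4.
Proof.
elim: x => [|x IHx] lt_xm; first by rewrite triples_le0 //; lia.
rewrite triples_leS //; have := IHx ltac:(lia); have := @pairs_le_double (x.+1)./2 ltac:(lia).
have [q ->] : exists q, x = q.*2 + odd x by exists x./2; rewrite addnC odd_double_half.
case: (odd x) => /=; rewrite ?addn1 ?addn0 /= ?odd_double ?doubleK ?uphalf_double /=; nia.
Qed.

End LatticeCount.

Lemma bin3_mul6 n : 'C(n, 3) * 6 = n * n.-1 * n.-2.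
Proof. by rewrite -[6]/(3`!) bin_ffact !ffactnS ffactn0 muln1 mulnA. Qed.

Lemma a_seq_triples_le m x : x < m -> a_seq x.+2 = triples_le m x.
Proof.
move=> lt_xm; have := triples_le_24 lt_xm; rewrite /a_seq /=.
case: (odd x) => /= count24.
  by rewrite (_ : _ * _ * _ = triples_le m x * 24) ?mulnK //; lia.
rewrite (_ : 'C(_, 3) = triples_le m x * 4) ?mulnK //.
by have := bin3_mul6 (x.+2 + 2); rewrite (_ : x.+2 + 2 = x.+4) //=; nia.
Qed.

Lemma ninv_perm1 m : ninv (1%g : 'S_m) = 0.
Proof.
apply/eqP; rewrite cards_eq0; apply/eqP/setP => p.
by rewrite !inE !perm1; apply/negbTE/negP => /andP[]; lia.
Qed.

Definition least_odd_gt (L : nat) : nat := if odd L then L.+2 else L.+1.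

Lemma least_odd_gt_odd L : odd (least_odd_gt L).
Proof. by rewrite /least_odd_gt; case: ifP => /= ->. Qed.

Lemma least_odd_gt_gt L : L < least_odd_gt L.
Proof. by rewrite /least_odd_gt; case: ifP. Qed.

Lemma odd_gt_least_odd_gt L b : odd b -> L < b -> exists x, b = least_odd_gt L + 2 * x.
Proof.
move=> odd_b lt_Lb; exists ((b - least_odd_gt L)./2).
by rewrite /least_odd_gt; case: ifP; lia.
Qed.

Definition bswap_param (m j : nat) (t : 'I_m * 'I_m * 'I_m) : 'S_m :=
  bswap m t.1.1 (j + 2 * t.1.2) (j + 2 * t.2).

Definition admissible_params (m j : nat) :=
  [set t : 'I_m * 'I_m * 'I_m | t.1.1 + (j + 2 * t.1.2) + (j + 2 * t.2) <= m].

Lemma odd_bigrassmannian_avoiders k m :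
  [set s : 'S_m | [&& bigrassmannian s, odd_perm_inv s & avoids_id k s]] =
  bswap_param (least_odd_gt (m - k)) @: admissible_params m (least_odd_gt (m - k)).
Proof.
set j := least_odd_gt (m - k); have odd_j := least_odd_gt_odd (m - k).
have lt_j := least_odd_gt_gt (m - k).
have odd_jx x : odd (j + 2 * x) by rewrite oddD oddM /= addbF odd_j.
apply/setP => s; rewrite inE; apply/and3P/imsetP => [[bigr_s odd_s avoid_s]|[t adm_t ->]].
  have s_neq1 : s != 1%g by apply: contraTneq odd_s => ->; rewrite /odd_perm_inv ninv_perm1.
  have [a [b [c [b_gt0 c_gt0 le_m s_eq]]]] := bigrassmannian_bswap_form bigr_s s_neq1.
  move: odd_s avoid_s; rewrite s_eq /odd_perm_inv /avoids_id.
  rewrite ninv_bswap // oddM contains_id_bswap //.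
  case/andP => odd_b odd_c /norP[/negP lt_b /negP lt_c].
  have [x b_eq] := @odd_gt_least_odd_gt (m - k) b odd_b ltac:(lia).
  have [y c_eq] := @odd_gt_least_odd_gt (m - k) c odd_c ltac:(lia).
  have lt_a : a < m by lia.
  have lt_x : x < m by lia.
  have lt_y : y < m by lia.
  exists (Ordinal lt_a, Ordinal lt_x, Ordinal lt_y); first by rewrite inE /=; lia.
  by rewrite /bswap_param /= -b_eq -c_eq.
rewrite inE in adm_t; rewrite /bswap_param bigrassmannian_bswap //.
rewrite /odd_perm_inv /avoids_id ninv_bswap // oddM !odd_jx contains_id_bswap //.
by split=> //; apply/norP; split; apply/negP; lia.
Qed.

Lemma card_bswap_param m j : 0 < j ->
  #|bswap_param j @: admissible_params m j| = #|admissible_params m j|.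
Proof.
move=> j_gt0; apply: card_in_imset => -[[a x] y] [[a' x'] y']; rewrite !inE /= => adm adm' eq_s.
have := @block_swap_params_inj m a (j + 2 * x) (j + 2 * y) a' (j + 2 * x') (j + 2 * y').
case=> //; try lia.
  move=> i lt_im; have := congr1 (fun s : 'S_m => val (s (Ordinal lt_im))) eq_s.
  by rewrite /bswap_param /= !bswapE.
by move=> /ord_inj -> eq_x eq_y; congr (_, _, _); apply: ord_inj; lia.
Qed.

Lemma card_triples m (P : 'I_m -> 'I_m -> 'I_m -> bool) :
  #|[set t : 'I_m * 'I_m * 'I_m | P t.1.1 t.1.2 t.2]| =
  \sum_(a < m) \sum_(b < m) \sum_(c < m) P a b c.
Proof.
rewrite -sum1_card big_mkcond /= !pair_big /=.
by apply: eq_bigr => -[[a b] c] _; rewrite inE /=; case: (P a b c).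
Qed.

Lemma card_admissible_params m j :
  #|admissible_params m j| = if 2 * j <= m then triples_le m (m - 2 * j) else 0.
Proof.
rewrite (card_triples (fun a b c : 'I_m => a + (j + 2 * b) + (j + 2 * c) <= m)).
case: leqP => le_2j.
  by apply: eq_bigr => a _; apply: eq_bigr => b _; apply: eq_bigr => c _; congr nat_of_bool; lia.
by rewrite big1 // => a _; rewrite big1 // => b _; rewrite big1 // => c _; case: leqP; lia.
Qed.

Lemma a_seq_le1 x : x <= 1 -> a_seq x = 0.
Proof. by case: x => [|[]]. Qed.

Lemma a_seq_least_odd_gt k m : 1 <= k -> 1 <= m ->
  (if m <= k then a_seq m
   else if m < 2 * k then
     (if ~~ odd (m - k) then a_seq (2 * k - m) else a_seq (2 * k - m - 2))
   else 0) =
  (if 2 * least_odd_gt (m - k) <= m then a_seq (m - 2 * least_odd_gt (m - k)).+2 else 0).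
Proof.
move=> k_gt0 m_gt0; rewrite /least_odd_gt.
case: (leqP m k) => [le_mk|lt_km].
  rewrite (_ : m - k = 0) /=; last by lia.
  by case: ifP => le_2m; first [by congr a_seq; lia | by rewrite a_seq_le1; lia].
case: (ltnP m (2 * k)) => [lt_m2k|le_2km]; last by case: ifP => //; case: ifP; lia.
case: (odd (m - k)) => /=; case: ifP => le_2j;
  first [by congr a_seq; lia | by rewrite a_seq_le1; lia].
Qed.

Theorem theorem5p4 (k m : nat) (hk : 1 <= k) (hm : 1 <= m) :
  #|[set s : 'S_m | [&& bigrassmannian s, odd_perm_inv s & avoids_id k s]]| =
  (if m <= k then a_seq m
   else if m < 2 * k then
     (if ~~ odd (m - k) then a_seq (2 * k - m) else a_seq (2 * k - m - 2))
   else 0).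
Proof.
rewrite a_seq_least_odd_gt // odd_bigrassmannian_avoiders.
set j := least_odd_gt (m - k); have j_gt0 : 0 < j := leq_ltn_trans (leq0n _) (least_odd_gt_gt _).
rewrite card_bswap_param // card_admissible_params.
by case: ifP => // le_2j; rewrite (@a_seq_triples_le m) //; lia.
Qed.
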